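(* Let $\mathbf{C}$ be a category of $\mathbf{FI}$ type, and let $M_\bullet$, $N_\bullet$ be free $\mathbf{C}$-modules over $\mathbb{C}$ of respective degrees $\leq c_1$ and $\leq c_2$. Then for every object $d$ there is a natural isomorphism $\mathrm{Hom}_{G_d}(M_d,N_d)\cong (M^*\otimes N)_d/G_d$, and for all objects $d\leq e$ with $d\geq c_1+c_2$ the canonical map between these spaces induced by morphisms $d\to e$ is an isomorphism.
   Context: A category $\mathbf{C}$ is of $\mathbf{FI}$ type if: (1) all Hom-sets are finite; (2) every morphism is a monomorphism and every endomorphism is an isomorphism; (3) for all objects $c,d$ the group $G_d=\mathrm{Aut}_{\mathbf{C}}(d)$ acts transitively on $\mathrm{Hom}_{\mathbf{C}}(c,d)$; (4) for every $d$ there are only finitely many isomorphism classes of $c$ with $\mathrm{Hom}(c,d)\neq\emptyset$; (5) every pair $c_1\to d\leftarrow c_2$ has a pullback, and every pair $f_i:p\to c_i$ has a weak push-out, i.e. a commutative pullback square $g_i:c_i\to d$ such that for every other pullback square $h_i:c_i\to z$ with $h_1f_1=h_2f_2$ there is a unique $h:d\to z$ with $hg_i=h_i$. Write $c\leq d$ if $\mathrm{Hom}(c,d)\neq\emptyset$; $G_c=\mathrm{Aut}(c)$. A $\mathbf{C}$-module is a functor to complex vector spaces. For a finite-dimensional $G_c$-representation $V$, $\mathrm{Ind}_c(V)$ is $d\mapsto\mathbb{C}[\mathrm{Hom}(c,d)]\otimes_{\mathbb{C}[G_c]}V$. A free module is a finite direct sum of these, of degree $\leq d$ if each summand $\mathrm{Ind}_c(V)$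 ($V\neq0$) has $c\leq d$. The dual of $\bigoplus_i\mathrm{Ind}_{c_i}(V_i)$ is $\bigoplus_i\mathrm{Ind}_{c_i}(V_i^* )$; tensor products are pointwise. Write $d\geq c_1+c_2$ if $w\leq d$ for every weak push-out object $w$ of any pair $p\to c_1$, $p\to c_2$. $V/G$ denotes coinvariants. *)

From HB Require Import structures.
From mathcomp Require Import all_boot all_order all_algebra.
Set Implicit Arguments. Unset Strict Implicit. Unset Printing Implicit Defensive.
Import GRing.Theory Num.Theory.
Local Open Scope ring_scope.

Record category := Category {
  Obj : Type;
  Mor : Obj -> Obj -> finType;
  idm : forall c, Mor c c;
  comp : forall a b c, Mor b c -> Mor a b -> Mor a c;
  compA : forall a b c e (h : Mor c e) (g : Mor b c) (f : Mor a b),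
      comp h (comp g f) = comp (comp h g) f;
  comp1m : forall a b (f : Mor a b), comp (idm b) f = f;
  compm1 : forall a b (f : Mor a b), comp f (idm a) = f }.
Arguments Mor {_} _ _.
Arguments idm {_} _.
Arguments comp {_ _ _ _} _ _.

Section CatDefs.
Variable C : category.

Definition leo (c d : Obj C) : Prop := inhabited (Mor c d).

Definition is_iso (a b : Obj C) (f : Mor a b) : Prop :=
  exists g : Mor b a, comp g f = idm a /\ comp f g = idm b.

Definition isomorphic (a b : Obj C) : Prop := exists f : Mor a b, is_iso f.

Definition is_pullback (c1 c2 d : Obj C) (f1 : Mor c1 d) (f2 : Mor c2 d)
    (p : Obj C) (p1 : Mor p c1) (p2 : Mor p c2) : Prop :=
  comp f1 p1 = comp f2 p2 /\
  forall (z : Obj C) (q1 : Mor z c1) (q2 : Mor z c2), comp f1 q1 = comp f2 q2 ->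
    exists! u : Mor z p, comp p1 u = q1 /\ comp p2 u = q2.

Definition is_weak_pushout (p c1 c2 : Obj C) (f1 : Mor p c1) (f2 : Mor p c2)
    (d : Obj C) (g1 : Mor c1 d) (g2 : Mor c2 d) : Prop :=
  is_pullback g1 g2 f1 f2 /\
  forall (z : Obj C) (h1 : Mor c1 z) (h2 : Mor c2 z), is_pullback h1 h2 f1 f2 ->
    exists! h : Mor d z, comp h g1 = h1 /\ comp h g2 = h2.

(** Category of FI type (finiteness of Mor-sets is built into [cat]). *)
Definition FI_type : Prop :=
  (forall (a b c : Obj C) (f : Mor b c) (g h : Mor a b), comp f g = comp f h -> g = h) /\
  (forall (c : Obj C) (f : Mor c c), is_iso f) /\
  (forall (c d : Obj C) (f f' : Mor c d), exists g : Mor d d, is_iso g /\ comp g f = f') /\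
  (forall d : Obj C, exists (n : nat) (s : 'I_n -> Obj C),
      forall c : Obj C, leo c d -> exists i : 'I_n, isomorphic c (s i)) /\
  (forall (c1 c2 d : Obj C) (f1 : Mor c1 d) (f2 : Mor c2 d),
      exists (p : Obj C) (p1 : Mor p c1) (p2 : Mor p c2), is_pullback f1 f2 p1 p2) /\
  (forall (p c1 c2 : Obj C) (f1 : Mor p c1) (f2 : Mor p c2),
      exists (d : Obj C) (g1 : Mor c1 d) (g2 : Mor c2 d), is_weak_pushout f1 f2 g1 g2).

Definition geq_sum (c1 c2 d : Obj C) : Prop :=
  forall (p : Obj C) (f1 : Mor p c1) (f2 : Mor p c2) (w : Obj C)
         (g1 : Mor c1 w) (g2 : Mor c2 w), is_weak_pushout f1 f2 g1 g2 -> leo w d.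

(** * Free modules  (+)_i Ind_{c_i}(V_i),  V_i = K^(n_i) with matrices rho_i *)
Variable K : fieldType.

Record freeData := FreeData {
  fk : nat;
  fc : 'I_fk -> Obj C;
  fn : 'I_fk -> nat;
  frho : forall i : 'I_fk, Mor (fc i) (fc i) -> 'M[K]_(fn i) }.

Definition is_rep (M : freeData) : Prop :=
  forall i : 'I_(fk M),
    frho (idm (fc i)) = 1%:M /\
    forall g h : Mor (fc i) (fc i), frho (comp g h) = frho g *m frho h.

Definition dual (M : freeData) : freeData :=
  @FreeData (fk M) (@fc M) (@fn M) (fun i g => (invmx (frho g))^T).

Definition deg_le (M : freeData) (c : Obj C) : Prop :=
  forall i : 'I_(fk M), (0 < fn i)%N -> leo (fc i) c.

Definition IdxT (M : freeData) (d : Obj C) (j : 'I_(fk M)) : Type :=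
  (Mor (fc j) d * 'I_(fn j))%type.
Definition Idx (M : freeData) (d : Obj C) : finType :=
  {j : 'I_(fk M) & (Mor (fc j) d * 'I_(fn j))%type}.
Definition Amb (M : freeData) (d : Obj C) := {ffun Idx M d -> K}.

Definition mkIdx (M : freeData) (d : Obj C) (i : 'I_(fk M)) (f : Mor (fc i) d)
  (a : 'I_(fn i)) : Idx M d := existT (@IdxT M d) i (f, a).

(** M_d = (+)_i C[Mor(c_i,d)] (x)_{C[G_{c_i}]} V_i, realised as the space of
    G_{c_i}-equivariant functions F_i : Mor(c_i,d) -> V_i,
    F_i(f o g) = rho_i(g)^-1 F_i(f)  (f (x) v  |->  [f o g |-> rho(g)^-1 v]). *)
Definition in_mod (M : freeData) (d : Obj C) (x : Amb M d) : Prop :=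
  forall (i : 'I_(fk M)) (f : Mor (fc i) d) (g : Mor (fc i) (fc i)) (a : 'I_(fn i)),
    x (mkIdx f a) = \sum_(b < fn i) frho g a b * x (mkIdx (comp f g) b).

Definition lift_idx (M : freeData) (d e : Obj C) (h : Mor d e) (y : Idx M d) : Idx M e :=
  existT (@IdxT M e) (tag y) (comp h (tagged y).1, (tagged y).2).

(** module structure map M(h) : M_d -> M_e  (induced by f (x) v |-> (h o f) (x) v) *)
Definition push (M : freeData) (d e : Obj C) (h : Mor d e) (x : Amb M d) : Amb M e :=
  [ffun y => \sum_(z | lift_idx h z == y) x z].

Definition TAmb (M N : freeData) (d : Obj C) := {ffun (Idx M d * Idx N d) -> K}.

Definition outer (M N : freeData) (d : Obj C) (a : Amb M d) (b : Amb N d) : TAmb M N d :=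
  [ffun p => a p.1 * b p.2].

Definition pushT (M N : freeData) (d e : Obj C) (h : Mor d e) (T : TAmb M N d) : TAmb M N e :=
  [ffun q => \sum_(p | (lift_idx h p.1 == q.1) && (lift_idx h p.2 == q.2)) T p].

Definition in_tens (M N : freeData) (d : Obj C) (T : TAmb M N d) : Prop :=
  exists s : seq (Amb M d * Amb N d),
    (forall p, p \in s -> @in_mod (dual M) d p.1 /\ @in_mod N d p.2) /\
    T = \sum_(p <- s) outer p.1 p.2.

(** T lies in the kernel of (M^* (x) N)_d ->> (M^* (x) N)_d / G_d,
    i.e. in span { g.t - t | g in G_d, t in (M^* (x) N)_d } *)
Definition in_coinv (M N : freeData) (d : Obj C) (T : TAmb M N d) : Prop :=
  exists s : seq (Mor d d * TAmb M N d),
    (forall p, p \in s -> is_iso p.1 /\ in_tens p.2) /\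
    T = \sum_(p <- s) (pushT p.1 p.2 - p.2).

(** the natural pairing map (M^* (x) N)_d -> Hom_K(M_d, N_d),
    a (x) b |-> (x |-> <a,x> b); also used to represent arbitrary linear maps
    of the ambient spaces by their kernel P. *)
Definition Phi (M N : freeData) (d : Obj C) (T : TAmb M N d) (x : Amb M d) : Amb N d :=
  [ffun y => \sum_z T (z, y) * x z].

(** the natural map (M^* (x) N)_d -> Hom_{G_d}(M_d,N_d):
    T |-> sum_{g in G_d} g^-1 o Phi(T) o g   (G_d = End(d) in an FI-type category) *)
Definition Theta (M N : freeData) (d : Obj C) (T : TAmb M N d) (x : Amb M d) : Amb N d :=
  \sum_(g : Mor d d) \sum_(g' : Mor d d | comp g' g == idm d) push g' (Phi T (push g x)).

End CatDefs.

Arguments in_tens {C K} M N d T.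
Arguments in_coinv {C K} M N d T.
Arguments in_mod {C K} M d x.
Arguments push {C K M d e} h x.
Arguments pushT {C K M N d e} h T.
Arguments Phi {C K M N d} T x.
Arguments Theta {C K M N d} T x.
Arguments is_iso {C a b} f.

From Pilot Require Import Defs.
From HB Require Import structures.
From mathcomp Require Import all_boot all_order all_algebra ring.
Set Implicit Arguments. Unset Strict Implicit. Unset Printing Implicit Defensive.
Import GRing.Theory Num.Theory.
Local Open Scope ring_scope.
Local Notation comp := Defs.comp.
Local Notation compA := Defs.compA.

(* Hom_{G_d}(M_d, N_d) and (M^* (x) N)_d / G_d are compared through the orbit sum
   autsum T = sum_(g in G_d) g.T.  Since char K = 0, the coinvariant relations are
   exactly the tensors killed by autsum, and Theta T is x |-> sum_z autsum T (z, _) x_z;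
   as the pairing of M^*_d with M_d is nondegenerate, Theta T = 0 forces autsum T = 0,
   and averaging (modproj, tensproj) provides preimages of equivariant maps.
   Pushing along h : d -> e maps G_d-orbits of pairs of basis morphisms
   (c_i -> d, c_j -> d) injectively to G_e-orbits, since such a pair is determined up
   to G_d by the weak push-out of its pullback; when d >= c1 + c2 every such weak
   push-out for a pair into e embeds in d, so the map on orbits is onto.  Counting
   stabilisers turns this into injectivity and surjectivity of h on the coinvariants. *)

Section FITypeCategory.
Variable C : category.
Hypothesis FI : FI_type C.

Lemma compI (a b c : Obj C) (f : Mor b c) : injective (fun g : Mor a b => comp f g).
Proof. by case: FI => mono _ g h; apply: mono. Qed.
Arguments compI {a b c} f [x1 x2].

Lemma endo_iso (c : Obj C) (f : Mor c c) : is_iso f.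
Proof. by case: FI => _ [iso _]; apply: iso. Qed.

Lemma aut_trans (c d : Obj C) (f f' : Mor c d) : exists g : Mor d d, comp g f = f'.
Proof. by case: FI => _ [_ [trans _]]; have [g [_ E]] := trans c d f f'; exists g. Qed.

Definition invm (c : Obj C) (g : Mor c c) : Mor c c :=
  odflt (idm c) [pick g' | comp g' g == idm c].

Lemma compVm (c : Obj C) (g : Mor c c) : comp (invm g) g = idm c.
Proof.
rewrite /invm; case: pickP => [g' /eqP //|none].
by have [g' [E _]] := endo_iso g; move: (none g'); rewrite E eqxx.
Qed.

Lemma compmV (c : Obj C) (g : Mor c c) : comp g (invm g) = idm c.
Proof. by apply: (compI (invm g)); rewrite compA compVm comp1m compm1. Qed.

Lemma comp_endoI (a c : Obj C) (k : Mor a a) : injective (fun f : Mor a c => comp f k).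
Proof.
move=> f f' /(congr1 (comp^~ (invm k))).
by rewrite -!compA compmV !compm1.
Qed.
Arguments comp_endoI {a c} k [x1 x2].

Lemma invm_inj (c : Obj C) : injective (@invm c).
Proof. by move=> g h E; apply: (comp_endoI (invm g)); rewrite compmV E compmV. Qed.

Lemma invmK (c : Obj C) : involutive (@invm c).
Proof. by move=> g; apply: (compI (invm g)); rewrite compmV compVm. Qed.

Lemma invmM (c : Obj C) (g h : Mor c c) : invm (comp g h) = comp (invm h) (invm g).
Proof.
apply: (compI (comp g h)).
by rewrite compmV compA -(compA g h) compmV compm1 compmV.
Qed.

(* (f1, f2) and (f1', f2') have a common pullback p, so both factor through the
   weak push-out w of p, and G_d acts transitively on Mor(w, d). *)
Lemma lift_orbit_inj (A B d e : Obj C) (f1 f1' : Mor A d) (f2 f2' : Mor B d)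
    (h : Mor d e) (ga : Mor e e) :
  comp ga (comp h f1) = comp h f1' -> comp ga (comp h f2) = comp h f2' ->
  exists g : Mor d d, comp g f1 = f1' /\ comp g f2 = f2'.
Proof.
move=> E1 E2; case: FI => _ [_ [_ [_ [PB WP]]]].
have [p [p1 [p2 Hp]]] := PB _ _ _ f1 f2.
have Hp' : is_pullback f1' f2' p1 p2.
  case: Hp => comm univ; split.
    by apply: (compI h); rewrite !compA -E1 -E2 -!compA comm.
  move=> z q1 q2 Hq; apply: univ; apply: (compI h); apply: (compI ga).
  by rewrite !compA -(compA ga h f1) -(compA ga h f2) E1 E2 -!compA Hq.
have [w [g1 [g2 [_ Hw]]]] := WP _ _ _ p1 p2.
have [u [[Hu1 Hu2] _]] := Hw _ _ _ Hp.
have [u' [[Hu1' Hu2'] _]] := Hw _ _ _ Hp'.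
have [g Hg] := aut_trans u u'.
by exists g; rewrite -Hu1 -Hu2 !compA Hg.
Qed.

(* The pullback p of (F1, F2) is also a pullback over the weak push-out W of
   (k1 p1, k2 p2), which embeds in d as d >= c1 + c2; hence the weak push-out w of p,
   through which (F1, F2) factor, maps to d, and G_e is transitive on Mor(w, e). *)
Lemma lift_orbit_surj (c1 c2 d e A B : Obj C) (h : Mor d e) :
  geq_sum c1 c2 d -> leo A c1 -> leo B c2 ->
  forall (F1 : Mor A e) (F2 : Mor B e),
  exists (ga : Mor e e) (f1 : Mor A d) (f2 : Mor B d),
    comp ga (comp h f1) = F1 /\ comp ga (comp h f2) = F2.
Proof.
move=> ge_d [k1] [k2] F1 F2; case: FI => _ [_ [_ [_ [PB WP]]]].
have [p [p1 [p2 Hp]]] := PB _ _ _ F1 F2.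
have [w [g1 [g2 [_ Hw]]]] := WP _ _ _ p1 p2.
have [u [[Hu1 Hu2] _]] := Hw _ _ _ Hp.
have [W [G1 [G2 HW]]] := WP _ _ _ (comp k1 p1) (comp k2 p2).
have [phi] := ge_d _ _ _ _ _ _ HW.
have Hp2 : is_pullback (comp G1 k1) (comp G2 k2) p1 p2.
  case: HW => [[comm univ] _]; split; first by rewrite -!compA.
  move=> z q1 q2 Hq.
  have Hq' : comp G1 (comp k1 q1) = comp G2 (comp k2 q2) by rewrite !compA.
  have [v [[Hv1 Hv2] uniq_v]] := univ _ _ _ Hq'.
  exists v; split.
    by split; [apply: (compI k1) | apply: (compI k2)]; rewrite compA.
  by move=> v' [Hv1' Hv2']; apply: uniq_v; rewrite -!compA Hv1' Hv2'.
have [psi [[Hpsi1 Hpsi2] _]] := Hw _ _ _ Hp2.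
have [ga Hga] := aut_trans (comp h (comp phi psi)) u.
exists ga, (comp phi (comp psi g1)), (comp phi (comp psi g2)).
by split; rewrite -?Hu1 -?Hu2 -Hga -!compA.
Qed.

End FITypeCategory.

Arguments compI {C} FI {a b c} f [x1 x2].
Arguments comp_endoI {C} FI {a c} k [x1 x2].

Section PushForward.
Variable K : pzRingType.

Definition scalef (I : finType) (c : K) (x : {ffun I -> K}) : {ffun I -> K} :=
  [ffun w => c * x w].

Definition deltaf (I : finType) (z : I) : {ffun I -> K} := [ffun w => (w == z)%:R].

Definition pushG (I J : finType) (phi : I -> J) (x : {ffun I -> K}) : {ffun J -> K} :=
  [ffun y => \sum_(z | phi z == y) x z].

Lemma sum_mul_eq (I : finType) (x : I -> K) (w : I) : \sum_z x z * (w == z)%:R = x w.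
Proof.
rewrite (bigD1 w) //= eqxx mulr1 big1 ?addr0 // => z /negbTE.
by rewrite eq_sym => ->; rewrite mulr0.
Qed.

Lemma sum_eq_mul (I : finType) (x : I -> K) (w : I) : \sum_z (w == z)%:R * x z = x w.
Proof.
rewrite -[RHS](sum_mul_eq x); apply: eq_bigr => z _.
by case: eqP; rewrite ?mul1r ?mulr1 ?mul0r ?mulr0.
Qed.

Lemma scalef_sum (I : finType) (J : Type) (s : seq J) (P : pred J) c
    (F : J -> {ffun I -> K}) :
  \sum_(j <- s | P j) scalef c (F j) = scalef c (\sum_(j <- s | P j) F j).
Proof.
apply/ffunP => q; rewrite ffunE !sum_ffunE mulr_sumr.
by apply: eq_bigr => j _; rewrite ffunE.
Qed.

Section PushG.
Variables (I J : finType) (phi : I -> J).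

Lemma pushG_is_zmod_morphism : {morph pushG phi : x y / x - y}.
Proof.
move=> x y; apply/ffunP => q; rewrite !ffunE -sumrB.
by apply: eq_bigr => z _; rewrite !ffunE.
Qed.

HB.instance Definition _ :=
  GRing.isZmodMorphism.Build _ _ (pushG phi) pushG_is_zmod_morphism.

Lemma pushGZ c x : pushG phi (scalef c x) = scalef c (pushG phi x).
Proof.
apply/ffunP => q; rewrite !ffunE mulr_sumr.
by apply: eq_bigr => z _; rewrite ffunE.
Qed.

Lemma eq_pushG psi x : phi =1 psi -> pushG phi x = pushG psi x.
Proof. by move=> E; apply/ffunP => y; rewrite !ffunE; apply: eq_bigl => z; rewrite E. Qed.

Lemma pushG_bij (psi : J -> I) x :
  cancel phi psi -> cancel psi phi -> pushG phi x = [ffun y => x (psi y)].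
Proof.
move=> phiK psiK; apply/ffunP => y; rewrite !ffunE (big_pred1 (psi y)) // => z /=.
by apply/eqP/eqP => [<-|->]; rewrite ?phiK ?psiK.
Qed.

Lemma pushG_delta z : injective phi -> pushG phi (deltaf z) = deltaf (phi z).
Proof.
move=> phi_inj; apply/ffunP => y; rewrite !ffunE.
have [->|ne] := eqVneq y (phi z).
  by rewrite (big_pred1 z) ?ffunE ?eqxx // => z'; apply/eqP/eqP => [/phi_inj|->].
rewrite big1 // => z' /eqP E; rewrite ffunE; case: eqP => // E'.
by move: ne; rewrite -E E' eqxx.
Qed.

End PushG.

Lemma pushG_comp (I J L : finType) (phi : J -> L) (psi : I -> J) x :
  pushG (phi \o psi) x = pushG phi (pushG psi x).
Proof.
apply/ffunP => y; rewrite !ffunE (partition_big psi (fun z' => phi z' == y)) //=.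
apply: eq_bigr => z' Hz'; rewrite ffunE; apply: eq_bigl => z.
by apply/andP/eqP => [[_ /eqP //]|E]; rewrite E Hz'.
Qed.

Lemma pushG_id (I : finType) x : pushG (@id I) x = x.
Proof. by apply/ffunP => y; rewrite ffunE big_pred1_eq. Qed.

End PushForward.

Section FreeModules.
Variable C : category.
Hypothesis FI : FI_type C.
Variable K : numFieldType.

Definition aut_card (c : Obj C) : K := #|Mor c c|%:R.

Lemma aut_card_neq0 c : aut_card c != 0.
Proof. by rewrite /aut_card pnatr_eq0 -lt0n; apply/card_gt0P; exists (idm c). Qed.

Section Coordinates.
Variable M : freeData C K.

Lemma sum_Idx d (G : Idx M d -> K) :
  \sum_(z : Idx M d) G z = \sum_i \sum_(f : Mor (fc i) d) \sum_(a < fn i) G (mkIdx f a).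
Proof.
pose T (i : 'I_(fk M)) := (Mor (fc i) d * 'I_(fn i))%type.
transitivity (\sum_i \sum_(t : T i) G (Tagged T t)).
  rewrite (sig_big_dep xpredT (fun i => xpredT) (fun i t => G (Tagged T t))) /=.
  by apply: eq_bigr => -[i t].
by apply: eq_bigr => i _; rewrite pair_bigA; apply: eq_bigr => -[f a].
Qed.

Lemma lift_idx_comp d e e' (u : Mor e e') (v : Mor d e) (z : Idx M d) :
  lift_idx (comp u v) z = lift_idx u (lift_idx v z).
Proof. by case: z => i [f a]; rewrite /lift_idx /= compA. Qed.

Lemma lift_idx_id d (z : Idx M d) : lift_idx (idm d) z = z.
Proof. by case: z => i [f a]; rewrite /lift_idx /= comp1m. Qed.

Lemma lift_idx_inj d e (u : Mor d e) : injective (@lift_idx _ _ M d e u).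
Proof.
case=> i [f a] [j [g b]]; rewrite /lift_idx /= => E.
have Eij : i = j := congr1 tag E.
case: j / Eij in g b E *.
by case: (eq_from_Tagged E) => /(compI FI) -> ->.
Qed.

Lemma pushE d e (u : Mor d e) (x : Amb M d) : push u x = pushG (lift_idx u) x.
Proof. by []. Qed.

HB.instance Definition _ d e (u : Mor d e) :=
  GRing.isZmodMorphism.Build _ _ (@push C K M d e u)
    (pushG_is_zmod_morphism (lift_idx u)).

Lemma push_mkIdx d e (u : Mor d e) (x : Amb M d) i (F : Mor (fc i) e) (a : 'I_(fn i)) :
  push u x (mkIdx F a) = \sum_(f | comp u f == F) x (mkIdx f a).
Proof.
rewrite ffunE big_mkcond sum_Idx (bigD1 i) //= [X in _ + X]big1 ?addr0; last first.
  move=> j /negbTE nij; apply: big1 => f _; apply: big1 => b _.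
  by case: eqP => // /(congr1 tag) /= /eqP; rewrite nij.
rewrite [RHS]big_mkcond; apply: eq_bigr => f _.
rewrite (bigD1 a) //= big1 ?addr0; first by rewrite eq_Tagged /= xpair_eqE eqxx andbT.
by move=> b /negbTE nba; rewrite eq_Tagged /= xpair_eqE nba andbF.
Qed.

Lemma push_comp d e e' (u : Mor e e') (v : Mor d e) (x : Amb M d) :
  push (comp u v) x = push u (push v x).
Proof. by rewrite !pushE -pushG_comp; apply: eq_pushG => z; apply: lift_idx_comp. Qed.

Lemma push_id d (x : Amb M d) : push (idm d) x = x.
Proof. by rewrite pushE (eq_pushG _ (@lift_idx_id d)) pushG_id. Qed.

Lemma push_aut d (g : Mor d d) (x : Amb M d) :
  push g x = [ffun y => x (lift_idx (invm g) y)].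
Proof.
by rewrite pushE; apply: pushG_bij => z;
  rewrite -lift_idx_comp ?(compVm FI) ?(compmV FI) lift_idx_id.
Qed.

Lemma push_delta d e (u : Mor d e) (z : Idx M d) :
  push u (deltaf K z) = deltaf K (lift_idx u z).
Proof. by rewrite pushE pushG_delta //; apply: lift_idx_inj. Qed.

Lemma in_mod0 d : in_mod M d 0.
Proof. by move=> i f g a; rewrite ffunE big1 // => b _; rewrite ffunE mulr0. Qed.

Lemma in_modD d (x y : Amb M d) : in_mod M d x -> in_mod M d y -> in_mod M d (x + y).
Proof.
move=> Hx Hy i f g a; rewrite ffunE (Hx i f g a) (Hy i f g a) -big_split.
by apply: eq_bigr => b _; rewrite ffunE mulrDr.
Qed.

Lemma in_modZ d c (x : Amb M d) : in_mod M d x -> in_mod M d (scalef c x).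
Proof.
move=> Hx i f g a; rewrite ffunE (Hx i f g a) mulr_sumr.
by apply: eq_bigr => b _; rewrite ffunE mulrCA.
Qed.

Lemma in_mod_sum d (I : Type) (s : seq I) (P : pred I) (F : I -> Amb M d) :
  (forall i, P i -> in_mod M d (F i)) -> in_mod M d (\sum_(i <- s | P i) F i).
Proof. by move=> H; apply: big_ind => //; [apply: in_mod0 | apply: in_modD]. Qed.

Lemma in_mod_push d e (u : Mor d e) (x : Amb M d) : in_mod M d x -> in_mod M e (push u x).
Proof.
move=> Hx i F g a; rewrite push_mkIdx.
under [RHS]eq_bigr => b _ do rewrite push_mkIdx mulr_sumr.
rewrite exchange_big /= [RHS](reindex_inj (comp_endoI FI g)) /=.
apply: eq_big => [f|f _]; last by rewrite (Hx i f g a).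
by apply/eqP/eqP => [E|]; [rewrite compA E | rewrite compA => /(comp_endoI FI)].
Qed.

(* Projection of Amb M d onto M_d: on the i-th summand it averages over G_{c_i}
   the relation defining in_mod. *)
Definition modproj d (x : Amb M d) : Amb M d :=
  [ffun z : Idx M d => (aut_card (fc (tag z)))^-1 *
     \sum_(k : Mor (fc (tag z)) (fc (tag z))) \sum_(b < fn (tag z))
        @frho C K M (tag z) k (tagged z).2 b * x (mkIdx (comp (tagged z).1 k) b)].

Lemma modprojE d (x : Amb M d) i (f : Mor (fc i) d) (a : 'I_(fn i)) :
  modproj x (mkIdx f a) = (aut_card (fc i))^-1 *
     \sum_(k : Mor (fc i) (fc i)) \sum_(b < fn i) frho k a b * x (mkIdx (comp f k) b).
Proof. by rewrite ffunE. Qed.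

Lemma push_modproj d e (u : Mor d e) (x : Amb M d) :
  push u (modproj x) = modproj (push u x).
Proof.
apply/ffunP => -[i [F a]].
change (push u (modproj x) (mkIdx F a) = modproj (push u x) (mkIdx F a)).
rewrite push_mkIdx modprojE; under eq_bigr => f _ do rewrite modprojE.
rewrite -mulr_sumr; congr (_ * _).
under [RHS]eq_bigr => k _ do under eq_bigr => b _ do rewrite push_mkIdx mulr_sumr.
rewrite exchange_big /=; apply: eq_bigr => k _.
rewrite exchange_big /=; apply: eq_bigr => b _.
rewrite [RHS](reindex_inj (comp_endoI FI k)) /=; apply: eq_bigl => f.
by apply/eqP/eqP => [E|]; [rewrite compA E | rewrite compA => /(comp_endoI FI)].
Qed.

Lemma modproj_expand d (x : Amb M d) w : modproj x w = \sum_z x z * modproj (deltaf K z) w.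
Proof.
case: w => i [f a].
change (modproj x (mkIdx f a) = \sum_z x z * modproj (deltaf K z) (mkIdx f a)).
rewrite modprojE; under [RHS]eq_bigr => z _ do rewrite modprojE mulrCA.
rewrite -mulr_sumr; congr (_ * _).
under [RHS]eq_bigr => z _ do rewrite mulr_sumr.
rewrite [RHS]exchange_big; apply: eq_bigr => k _.
under [RHS]eq_bigr => z _ do rewrite mulr_sumr.
rewrite [RHS]exchange_big; apply: eq_bigr => b _.
under [RHS]eq_bigr => z _ do rewrite ffunE mulrCA.
by rewrite -mulr_sumr sum_mul_eq.
Qed.

Lemma modproj_id d (x : Amb M d) : in_mod M d x -> modproj x = x.
Proof.
move=> Hx; apply/ffunP => -[i [f a]].
change (modproj x (mkIdx f a) = x (mkIdx f a)).
rewrite modprojE; under eq_bigr => k _ do rewrite -(Hx i f k a).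
by rewrite sumr_const -mulr_natl mulKf ?aut_card_neq0.
Qed.

Section Representation.
Hypothesis HM : is_rep M.

Lemma rho1 i : @frho C K M i (idm (fc i)) = 1%:M.
Proof. by case: (HM i). Qed.

Lemma rhoM i (g h : Mor (fc i) (fc i)) : @frho C K M i (comp g h) = frho g *m frho h.
Proof. by case: (HM i). Qed.

Lemma invmx_rho i (g : Mor (fc i) (fc i)) : invmx (@frho C K M i g) = frho (invm g).
Proof.
have E : frho g *m frho (invm g) = 1%:M by rewrite -rhoM (compmV FI) rho1.
have [U _] := mulmx1_unit E.
by rewrite -[invmx _]mulmx1 -E mulmxA mulVmx // mul1mx.
Qed.

Lemma modproj_in_mod d (x : Amb M d) : in_mod M d (modproj x).
Proof.
move=> i f g a; rewrite modprojE; symmetry.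
under eq_bigr => b _ do rewrite modprojE mulrCA.
rewrite -mulr_sumr; congr (_ * _).
rewrite [RHS](reindex_inj (compI FI g)) /=.
under [RHS]eq_bigr => k _ do under eq_bigr => b' _ do rewrite rhoM mxE big_distrl /=.
under eq_bigr => b _ do rewrite mulr_sumr.
rewrite exchange_big; apply: eq_bigr => k _.
under eq_bigr => b _ do rewrite mulr_sumr.
rewrite exchange_big; apply: eq_bigr => b' _.
by apply: eq_bigr => b _; rewrite mulrA compA.
Qed.

End Representation.
End Coordinates.

Section Contragredient.
Variable M : freeData C K.
Variable rho' : forall i : 'I_(fk M), Mor (fc i) (fc i) -> 'M[K]_(fn i).
Let M' := @FreeData C K (fk M) (@fc C K M) (@fn C K M) rho'.
Hypothesis rho'K : forall i (k : Mor (fc i) (fc i)), (@frho C K M i k)^T *m rho' k = 1%:M.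

Lemma contragredient_in_mod d (a : Amb M d) : in_mod M' d a ->
  forall i (f : Mor (fc i) d) k (b : 'I_(fn i)),
  \sum_al frho k al b * a (mkIdx f al) = a (mkIdx (comp f k) b).
Proof.
move=> Ha i f k b.
have rho_rho' b' : \sum_al frho k al b * rho' k al b' = (b == b')%:R.
  have := congr1 (fun A : 'M[K]_(fn i) => A b b') (rho'K k).
  by rewrite !mxE => <-; apply: eq_bigr => al _; rewrite mxE.
under eq_bigr => al _ do rewrite [a _](Ha i f k al) mulr_sumr.
rewrite exchange_big /=.
under eq_bigr => b' _ do under eq_bigr => al _ do rewrite mulrA.
under eq_bigr => b' _ do rewrite -big_distrl /= rho_rho'.
exact: sum_eq_mul.
Qed.

Lemma modproj_adjoint d (a y : Amb M d) : in_mod M' d a ->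
  \sum_z a z * modproj y z = \sum_z a z * y z.
Proof.
move=> Ha; rewrite !sum_Idx; apply: eq_bigr => i _.
set c := aut_card (fc i).
transitivity (c^-1 * \sum_(k : Mor (fc i) (fc i)) \sum_(f : Mor (fc i) d) \sum_(b < fn i)
   (\sum_al frho k al b * a (mkIdx f al)) * y (mkIdx (comp f k) b)).
  under eq_bigr => f _ do under eq_bigr => al _ do rewrite modprojE -/c mulrCA.
  under eq_bigr => f _ do rewrite -mulr_sumr.
  rewrite -mulr_sumr; congr (_ * _).
  under eq_bigr => f _ do under eq_bigr => al _ do rewrite mulr_sumr.
  under eq_bigr => f _ do rewrite exchange_big /=.
  rewrite exchange_big /=; apply: eq_bigr => k _; apply: eq_bigr => f _.
  under eq_bigr => al _ do rewrite mulr_sumr.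
  rewrite exchange_big /=; apply: eq_bigr => b _.
  by rewrite big_distrl /=; apply: eq_bigr => al _; rewrite mulrCA mulrA.
under eq_bigr => k _ do under eq_bigr => f _ do
  under eq_bigr => b _ do rewrite (contragredient_in_mod Ha).
have reindex k : \sum_(f : Mor (fc i) d) \sum_(b < fn i)
    a (mkIdx (comp f k) b) * y (mkIdx (comp f k) b) =
  \sum_(f : Mor (fc i) d) \sum_(b < fn i) a (mkIdx f b) * y (mkIdx f b).
  by rewrite [RHS](reindex_inj (comp_endoI FI k)).
under eq_bigr => k _ do rewrite reindex.
by rewrite sumr_const -mulr_natl mulKf ?aut_card_neq0.
Qed.

End Contragredient.

Section Dual.
Variable M : freeData C K.
Hypothesis HM : is_rep M.

Lemma dual_rep : is_rep (dual M).
Proof.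
move=> i; split => [|g h] /=; first by rewrite (rho1 HM) invmx1 trmx1.
by rewrite !(invmx_rho HM) (invmM FI) (rhoM HM) trmx_mul.
Qed.

Lemma dual_pairing_nondeg d (a : Amb M d) : in_mod (dual M) d a ->
  (forall x, in_mod M d x -> \sum_z a z * x z = 0) -> a = 0.
Proof.
move=> Ha a_perp; apply/ffunP => z.
have := a_perp _ (modproj_in_mod HM (deltaf K z)).
rewrite (@modproj_adjoint M (@frho C K (dual M))) //.
  by under eq_bigr => w _ do rewrite ffunE eq_sym; rewrite sum_mul_eq ffunE.
move=> i k /=.
by rewrite (invmx_rho HM) -trmx_mul -(rhoM HM) (compVm FI) (rho1 HM) trmx1.
Qed.

Lemma dual_modproj_adjoint d (u x : Amb M d) : in_mod M d x ->
  \sum_z modproj (M := dual M) u z * x z = \sum_z u z * x z.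
Proof.
move=> Hx; under eq_bigr => z _ do rewrite mulrC.
rewrite (@modproj_adjoint (dual M) (@frho C K M)) //.
  by apply: eq_bigr => z _; rewrite mulrC.
by move=> i k /=; rewrite trmxK (invmx_rho HM) -(rhoM HM) (compVm FI) (rho1 HM).
Qed.

End Dual.

End FreeModules.

Section Tensors.
Variable C : category.
Hypothesis FI : FI_type C.
Variable K : numFieldType.
Variables M N : freeData C K.

Definition lift_pair d e (h : Mor d e) (p : Idx M d * Idx N d) : Idx M e * Idx N e :=
  (lift_idx h p.1, lift_idx h p.2).

Lemma lift_pair_comp d e e' (u : Mor e e') (v : Mor d e) p :
  lift_pair (comp u v) p = lift_pair u (lift_pair v p).
Proof. by rewrite /lift_pair !lift_idx_comp. Qed.

Lemma lift_pair_id d p : lift_pair (idm d) p = p.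
Proof. by case: p => p1 p2; rewrite /lift_pair !lift_idx_id. Qed.

Lemma pushTE d e (h : Mor d e) (T : TAmb M N d) : pushT h T = pushG (lift_pair h) T.
Proof. by apply/ffunP => -[q1 q2]; rewrite !ffunE; apply: eq_bigl => -[p1 p2]. Qed.

Lemma pushT_is_zmod_morphism d e (h : Mor d e) :
  {morph @pushT C K M N d e h : S T / S - T}.
Proof. by move=> S T; rewrite !pushTE raddfB. Qed.

HB.instance Definition _ d e (h : Mor d e) :=
  GRing.isZmodMorphism.Build _ _ (@pushT C K M N d e h) (pushT_is_zmod_morphism h).

Lemma pushTZ d e (h : Mor d e) c (T : TAmb M N d) :
  pushT h (scalef c T) = scalef c (pushT h T).
Proof. by rewrite !pushTE pushGZ. Qed.

Lemma pushT_comp d e e' (u : Mor e e') (v : Mor d e) (T : TAmb M N d) :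
  pushT (comp u v) T = pushT u (pushT v T).
Proof. by rewrite !pushTE -pushG_comp; apply: eq_pushG => p; apply: lift_pair_comp. Qed.

Lemma pushT_aut d (g : Mor d d) (T : TAmb M N d) :
  pushT g T = [ffun q => T (lift_pair (invm g) q)].
Proof.
by rewrite pushTE; apply: pushG_bij => p;
  rewrite -lift_pair_comp ?(compVm FI) ?(compmV FI) lift_pair_id.
Qed.

Lemma pushT_outer d e (u : Mor d e) (a : Amb M d) (b : Amb N d) :
  pushT u (outer a b) = outer (push u a) (push u b).
Proof.
apply/ffunP => -[q1 q2]; rewrite !ffunE /= big_distrlr /= pair_big_dep /=.
by apply: eq_bigr => -[p1 p2] _; rewrite ffunE.
Qed.

Lemma outerZ d c (a : Amb M d) (b : Amb N d) : outer (scalef c a) b = scalef c (outer a b).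
Proof. by apply/ffunP => p; rewrite !ffunE mulrA. Qed.

Lemma in_tens0 d : in_tens M N d 0.
Proof. by exists [::]; split => //; rewrite big_nil. Qed.

Lemma in_tensD d (S T : TAmb M N d) :
  in_tens M N d S -> in_tens M N d T -> in_tens M N d (S + T).
Proof.
move=> [s [Hs ->]] [t [Ht ->]]; exists (s ++ t); split; last by rewrite big_cat.
by move=> p; rewrite mem_cat => /orP [/Hs|/Ht].
Qed.

Lemma in_tensZ d c (T : TAmb M N d) : in_tens M N d T -> in_tens M N d (scalef c T).
Proof.
move=> [s [Hs ->]]; exists [seq (scalef c p.1, p.2) | p <- s]; split.
  by move=> p /mapP [q /Hs [Hq1 Hq2] ->]; split => //; apply: in_modZ.
by rewrite big_map -scalef_sum; apply: eq_bigr => p _; rewrite outerZ.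
Qed.

Lemma in_tensB d (S T : TAmb M N d) :
  in_tens M N d S -> in_tens M N d T -> in_tens M N d (S - T).
Proof.
move=> HS HT; apply: in_tensD => //.
have -> : - T = scalef (-1) T by apply/ffunP => p; rewrite !ffunE mulN1r.
exact: in_tensZ.
Qed.

Lemma in_tens_sum d (I : Type) (s : seq I) (P : pred I) (F : I -> TAmb M N d) :
  (forall i, P i -> in_tens M N d (F i)) -> in_tens M N d (\sum_(i <- s | P i) F i).
Proof. by move=> H; apply: big_ind => //; [apply: in_tens0 | apply: in_tensD]. Qed.

Lemma in_tens_outer d (a : Amb M d) (b : Amb N d) :
  in_mod (dual M) d a -> in_mod N d b -> in_tens M N d (outer a b).
Proof.
move=> Ha Hb; exists [:: (a, b)]; rewrite big_seq1; split => // p.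
by rewrite inE => /eqP ->.
Qed.

Lemma in_tens_push d e (u : Mor d e) (T : TAmb M N d) :
  in_tens M N d T -> in_tens M N e (pushT u T).
Proof.
move=> [s [Hs ->]]; exists [seq (push u p.1, push u p.2) | p <- s]; split.
  by move=> p /mapP [q /Hs [Hq1 Hq2] ->]; split; apply: in_mod_push.
by rewrite big_map raddf_sum; apply: eq_bigr => p _; rewrite /= pushT_outer.
Qed.

Lemma in_tens_slices d (T : TAmb M N d) : in_tens M N d T ->
  (forall y, in_mod (dual M) d [ffun z => T (z, y)]) /\
  (forall z, in_mod N d [ffun y => T (z, y)]).
Proof.
move=> [s [Hs ->]]; split => [y|z].
  have -> : [ffun z => (\sum_(p <- s) outer p.1 p.2) (z, y)] =
            \sum_(p <- s) scalef (p.2 y) p.1.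
    apply/ffunP => z; rewrite ffunE !sum_ffunE.
    by apply: eq_bigr => p _; rewrite !ffunE mulrC.
  by rewrite big_seq; apply: in_mod_sum => p /Hs [Hp _]; apply: in_modZ.
have -> : [ffun y => (\sum_(p <- s) outer p.1 p.2) (z, y)] =
          \sum_(p <- s) scalef (p.1 z) p.2.
  by apply/ffunP => y; rewrite ffunE !sum_ffunE; apply: eq_bigr => p _; rewrite !ffunE.
by rewrite big_seq; apply: in_mod_sum => p /Hs [_ Hp]; apply: in_modZ.
Qed.

Lemma PhiD d (S T : TAmb M N d) x : Phi (S + T) x = Phi S x + Phi T x.
Proof.
apply/ffunP => y; rewrite !ffunE -big_split.
by apply: eq_bigr => z _; rewrite ffunE mulrDl.
Qed.

Lemma Phi0 d (x : Amb M d) : Phi (0 : TAmb M N d) x = 0.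
Proof. by apply/ffunP => y; rewrite !ffunE big1 // => z _; rewrite ffunE mul0r. Qed.

Lemma Phi_sum d x (I : Type) (s : seq I) (P : pred I) (F : I -> TAmb M N d) :
  Phi (\sum_(i <- s | P i) F i) x = \sum_(i <- s | P i) Phi (F i) x.
Proof. exact: (big_morph (Phi^~ x) (fun S T => PhiD S T x) (Phi0 x)). Qed.

Lemma PhiZ d c (T : TAmb M N d) x : Phi (scalef c T) x = scalef c (Phi T x).
Proof.
apply/ffunP => y; rewrite !ffunE mulr_sumr.
by apply: eq_bigr => z _; rewrite ffunE mulrA.
Qed.

Lemma Phi_pushT d (g : Mor d d) (T : TAmb M N d) x :
  Phi (pushT g T) x = push g (Phi T (push (invm g) x)).
Proof.
rewrite pushT_aut !(push_aut FI) (invmK FI); apply/ffunP => y; rewrite !ffunE.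
rewrite [RHS](reindex_inj (@lift_idx_inj _ FI _ M _ _ (invm g))) /=.
by apply: eq_bigr => z _; rewrite !ffunE -lift_idx_comp (compmV FI) lift_idx_id.
Qed.

Lemma Phi_in_mod d (T : TAmb M N d) x : in_tens M N d T -> in_mod N d (Phi T x).
Proof.
move=> /in_tens_slices [_ HT].
have -> : Phi T x = \sum_z scalef (x z) [ffun y => T (z, y)].
  apply/ffunP => y; rewrite ffunE sum_ffunE.
  by apply: eq_bigr => z _; rewrite !ffunE mulrC.
by apply: in_mod_sum => z _; apply: in_modZ.
Qed.

Definition autsum d (T : TAmb M N d) : TAmb M N d := \sum_(g : Mor d d) pushT g T.

Lemma autsum_is_zmod_morphism d : {morph @autsum d : S T / S - T}.
Proof. by move=> S T; rewrite /autsum -sumrB; apply: eq_bigr => g _; rewrite raddfB. Qed.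

HB.instance Definition _ d :=
  GRing.isZmodMorphism.Build _ _ (@autsum d) (@autsum_is_zmod_morphism d).

Lemma autsumZ d c (T : TAmb M N d) : autsum (scalef c T) = scalef c (autsum T).
Proof. by rewrite /autsum -scalef_sum; apply: eq_bigr => g _; rewrite pushTZ. Qed.

Lemma autsum_pushT d (g : Mor d d) (T : TAmb M N d) : autsum (pushT g T) = autsum T.
Proof.
rewrite /autsum; under eq_bigr => g' _ do rewrite -pushT_comp.
by rewrite [RHS](reindex_inj (comp_endoI FI g)).
Qed.

Lemma pushT_autsum d (g : Mor d d) (T : TAmb M N d) : pushT g (autsum T) = autsum T.
Proof.
rewrite /autsum raddf_sum; under eq_bigr => g' _ do rewrite /= -pushT_comp.
by rewrite [RHS](reindex_inj (compI FI g)).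
Qed.

Lemma in_tens_autsum d (T : TAmb M N d) : in_tens M N d T -> in_tens M N d (autsum T).
Proof. by move=> HT; apply: in_tens_sum => g _; apply: in_tens_push. Qed.

Lemma ThetaE d (T : TAmb M N d) x : Theta T x = Phi (autsum T) x.
Proof.
rewrite /Theta /autsum Phi_sum [RHS](reindex_inj (@invm_inj _ FI d)).
apply: eq_bigr => g _; rewrite (big_pred1 (invm g)); last first.
  move=> g'; apply/eqP/eqP => [E|->]; last exact: compVm.
  by rewrite -[g']compm1 -(compmV FI g) compA E comp1m.
by rewrite Phi_pushT (invmK FI).
Qed.

(* If autsum T = 0 then T = - |G_d|^-1 * sum_g (g.T - T). *)
Lemma in_coinvE d (T : TAmb M N d) :
  in_coinv M N d T <-> in_tens M N d T /\ autsum T = 0.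
Proof.
split=> [[s [Hs ->]]|[HT T0]].
  split; last by rewrite raddf_sum big1 // => p _; rewrite raddfB /= autsum_pushT subrr.
  rewrite big_seq; apply: in_tens_sum => p /Hs [_ Hp].
  by apply: in_tensB => //; apply: in_tens_push.
exists [seq (g, scalef (- (aut_card K d)^-1) T) | g <- enum (Mor d d)]; split.
  by move=> p /mapP [g _ ->]; split; [apply: endo_iso | apply: in_tensZ].
rewrite big_map big_enum /= sumrB.
under eq_bigr => g _ do rewrite pushTZ.
rewrite scalef_sum -/(autsum T) T0 sumr_const.
apply/ffunP => q; rewrite !(ffunE, ffunMnE) -mulr_natr mulr0 sub0r !mulNr opprK.
by rewrite mulrAC mulVf ?mul1r // aut_card_neq0.
Qed.

Lemma Theta_coinv d (T : TAmb M N d) x : in_coinv M N d T -> Theta T x = 0.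
Proof. by case/in_coinvE => _ T0; rewrite ThetaE T0 Phi0. Qed.

Lemma Theta_in_mod d (T : TAmb M N d) x : in_tens M N d T -> in_mod N d (Theta T x).
Proof. by move=> HT; rewrite ThetaE; apply/Phi_in_mod/in_tens_autsum. Qed.

Lemma Theta_push d (g : Mor d d) (T : TAmb M N d) x :
  Theta T (push g x) = push g (Theta T x).
Proof.
rewrite !ThetaE -{1}(pushT_autsum g) Phi_pushT.
by rewrite -push_comp (compVm FI) push_id.
Qed.

Definition tens_gen d (z : Idx M d) (y : Idx N d) : TAmb M N d :=
  outer (modproj (M := dual M) (deltaf K z)) (modproj (M := N) (deltaf K y)).

Definition tensproj d (S : TAmb M N d) : TAmb M N d :=
  \sum_p scalef (S p) (tens_gen p.1 p.2).

Lemma tensproj_id d (S : TAmb M N d) : in_tens M N d S -> tensproj S = S.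
Proof.
move=> HS; have [s [Hs E]] := HS; apply/ffunP => -[w v].
rewrite /tensproj sum_ffunE.
transitivity (\sum_p S p * (modproj (M := dual M) (deltaf K p.1) w *
                            modproj (M := N) (deltaf K p.2) v)).
  by apply: eq_bigr => p _; rewrite !ffunE.
rewrite E; under eq_bigr => p _ do rewrite sum_ffunE big_distrl.
rewrite exchange_big /= [RHS]sum_ffunE big_seq [RHS]big_seq.
apply: eq_bigr => q /Hs [Hq1 Hq2].
pose F z y := (q.1 z * modproj (M := dual M) (deltaf K z) w) *
              (q.2 y * modproj (M := N) (deltaf K y) v).
transitivity (\sum_p F p.1 p.2); first by apply: eq_bigr => p _; rewrite /F !ffunE; ring.
rewrite -(pair_bigA _ F) /F -big_distrlr /= -(modproj_expand (M := dual M)) -modproj_expand.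
by rewrite !modproj_id ?ffunE.
Qed.

Section Representations.
Hypotheses (HM : is_rep M) (HN : is_rep N).

Lemma in_tens_Phi_eq0 d (T : TAmb M N d) : in_tens M N d T ->
  (forall x, in_mod M d x -> Phi T x = 0) -> T = 0.
Proof.
move=> HT T0; have [HT1 _] := in_tens_slices HT.
apply/ffunP => -[z y].
suff /(congr1 (fun f : Amb M d => f z)) : [ffun z => T (z, y)] = 0 by rewrite !ffunE.
apply: (dual_pairing_nondeg FI HM (HT1 y)) => x Hx.
have /(congr1 (fun f : Amb N d => f y)) := T0 x Hx.
by rewrite !ffunE; apply: etrans; apply: eq_bigr => w _; rewrite ffunE.
Qed.

Lemma Theta_eq0_coinv d (T : TAmb M N d) :
  in_tens M N d T -> (forall x, in_mod M d x -> Theta T x = 0) -> in_coinv M N d T.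
Proof.
move=> HT T0; apply/in_coinvE; split => //.
by apply: in_tens_Phi_eq0 (in_tens_autsum HT) _ => x Hx; rewrite -ThetaE T0.
Qed.

Lemma in_tens_gen d (z : Idx M d) (y : Idx N d) : in_tens M N d (tens_gen z y).
Proof. by apply: in_tens_outer; apply: modproj_in_mod => //; apply: dual_rep. Qed.

Lemma in_tens_proj d (S : TAmb M N d) : in_tens M N d (tensproj S).
Proof. by apply: in_tens_sum => p _; apply/in_tensZ/in_tens_gen. Qed.

Lemma Phi_tensproj d (P : TAmb M N d) x : in_mod M d x -> in_mod N d (Phi P x) ->
  Phi (tensproj P) x = Phi P x.
Proof.
move=> Hx HP.
have pair_delta z : \sum_w modproj (M := dual M) (deltaf K z) w * x w = x z.
  rewrite (dual_modproj_adjoint FI HM _ Hx).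
  by under eq_bigr => w _ do rewrite ffunE eq_sym; rewrite sum_eq_mul.
apply/ffunP => y.
pose F z y' := P (z, y') * modproj (M := N) (deltaf K y') y * x z.
transitivity (\sum_(p : Idx M d * Idx N d) F p.1 p.2).
  rewrite ffunE; under eq_bigr => w _ do rewrite /tensproj sum_ffunE big_distrl.
  rewrite exchange_big; apply: eq_bigr => -[z y'] _.
  rewrite /F -pair_delta mulr_sumr; apply: eq_bigr => w _.
  by rewrite [scalef _ _ _]ffunE [outer _ _ _]ffunE /=; ring.
rewrite -(pair_bigA _ F) exchange_big /=.
transitivity (\sum_y' Phi P x y' * modproj (M := N) (deltaf K y') y).
  apply: eq_bigr => y' _; rewrite ffunE big_distrl.
  by apply: eq_bigr => z _; rewrite /F /=; ring.
by rewrite -(modproj_expand (M := N)) modproj_id.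
Qed.

(* Every G_d-conjugate of tensproj P induces Phi P, as Phi P is equivariant. *)
Lemma Theta_surj d (P : TAmb M N d) :
  (forall x, in_mod M d x -> in_mod N d (Phi P x)) ->
  (forall (g : Mor d d) x, in_mod M d x -> Phi P (push g x) = push g (Phi P x)) ->
  exists2 T, in_tens M N d T & forall x, in_mod M d x -> Theta T x = Phi P x.
Proof.
move=> P_mod P_equiv; exists (scalef (aut_card K d)^-1 (tensproj P)).
  exact/in_tensZ/in_tens_proj.
move=> x Hx; have Hx' g := in_mod_push FI (invm g) Hx.
have orbit_term g : Phi (pushT g (tensproj P)) x = Phi P x.
  rewrite Phi_pushT Phi_tensproj //; last exact/P_mod.
  by rewrite -P_equiv // -push_comp (compmV FI) push_id.
rewrite ThetaE autsumZ PhiZ /autsum Phi_sum.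
under eq_bigr => g _ do rewrite orbit_term.
rewrite sumr_const; apply/ffunP => y; rewrite !(ffunE, ffunMnE) -mulr_natr mulrCA.
by rewrite mulVf ?mulr1 //; apply: aut_card_neq0.
Qed.

End Representations.

Lemma lift_pair_orbit d e (h : Mor d e) (ga : Mor e e) (Z X : Idx M d * Idx N d) :
  lift_pair (comp ga h) Z = lift_pair h X -> exists g : Mor d d, lift_pair g Z = X.
Proof.
move: Z X => [[i [f1 a]] [j [f2 b]]] [[i' [f1' a']] [j' [f2' b']]] E.
have /= E1 := congr1 fst E; have /= E2 := congr1 snd E; clear E.
have Ei : i = i' := congr1 tag E1; case: i' / Ei in f1' a' E1 *.
have Ej : j = j' := congr1 tag E2; case: j' / Ej in f2' b' E2 *.
have [Ef1 ->] := eq_from_Tagged E1; have [Ef2 ->] := eq_from_Tagged E2.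
rewrite /= -compA in Ef1; rewrite /= -compA in Ef2.
have [g [Hg1 Hg2]] := lift_orbit_inj FI Ef1 Ef2.
by exists g; rewrite /lift_pair /lift_idx /= Hg1 Hg2.
Qed.

Lemma sum_pushTE d e (I : finType) (u : I -> Mor d e) (T : TAmb M N d) Y :
  (\sum_i pushT (u i) T) Y = \sum_Z T Z * \sum_i ((lift_pair (u i) Z == Y)%:R : K).
Proof.
rewrite sum_ffunE; under eq_bigr => i _ do rewrite pushTE ffunE big_mkcond.
rewrite exchange_big /=; apply: eq_bigr => Z _; rewrite mulr_sumr.
by apply: eq_bigr => i _; case: eqP; rewrite ?mulr1 ?mulr0.
Qed.

(* Both sides vanish unless g0 Z = X for some g0 in G_d; then reindexing by g0
   turns each transporter count into a stabiliser order. *)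
Lemma transporter_lift_count d e (h : Mor d e) (Z X : Idx M d * Idx N d) :
  (\sum_(ga : Mor e e) ((lift_pair (comp ga h) Z == lift_pair h X)%:R : K)) *
    \sum_(g : Mor d d) ((lift_pair g X == X)%:R : K) =
  (\sum_(ga : Mor e e) ((lift_pair ga (lift_pair h X) == lift_pair h X)%:R : K)) *
    \sum_(g : Mor d d) ((lift_pair g Z == X)%:R : K).
Proof.
have [/existsP [g0 /eqP g0Z]|/existsPn none] :=
  boolP [exists g : Mor d d, lift_pair g Z == X].
  have -> : \sum_(g : Mor d d) ((lift_pair g Z == X)%:R : K) =
            \sum_(g : Mor d d) ((lift_pair g X == X)%:R : K).
    rewrite (reindex_inj (comp_endoI FI g0)) /=.
    by apply: eq_bigr => g _; rewrite lift_pair_comp g0Z.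
  have [ga0 Hga0] := aut_trans FI h (comp h g0).
  have -> : \sum_(ga : Mor e e) ((lift_pair (comp ga h) Z == lift_pair h X)%:R : K) =
            \sum_(ga : Mor e e) ((lift_pair ga (lift_pair h X) == lift_pair h X)%:R : K).
    rewrite (reindex_inj (comp_endoI FI ga0)) /=.
    by apply: eq_bigr => ga _; rewrite -compA Hga0 !lift_pair_comp g0Z.
  by rewrite mulrC.
rewrite [X in _ = _ * X]big1 ?mulr0; last by move=> g _; rewrite (negbTE (none g)).
rewrite big1 ?mul0r // => ga _; case: eqP => // /lift_pair_orbit [g Hg].
by move: (none g); rewrite Hg eqxx.
Qed.

Lemma autsum_pushT_eq0 d e (h : Mor d e) (T : TAmb M N d) :
  autsum (pushT h T) = 0 -> autsum T = 0.
Proof.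
move=> hT0; apply/ffunP => X; rewrite ffunE.
pose stab d' (Y : Idx M d' * Idx N d') :=
  \sum_(g : Mor d' d') ((lift_pair g Y == Y)%:R : K).
have stab_neq0 d' Y : stab d' Y != 0.
  by rewrite /stab -natr_sum pnatr_eq0 (bigD1 (idm d')) //= lift_pair_id eqxx.
have /(congr1 (fun S : TAmb M N e => S (lift_pair h X) * stab d X)) :
    \sum_(ga : Mor e e) pushT (comp ga h) T = 0.
  by rewrite -[RHS]hT0; apply: eq_bigr => ga _; rewrite pushT_comp.
rewrite /= ffunE mul0r sum_pushTE mulr_suml.
under eq_bigr => Z _ do rewrite -mulrA transporter_lift_count mulrCA.
rewrite -mulr_sumr -sum_pushTE => /eqP.
by rewrite mulf_eq0 (negbTE (stab_neq0 _ _)) => /eqP.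
Qed.

Lemma autsum_pushT_indep d e (h h' : Mor d e) (T : TAmb M N d) :
  autsum (pushT h T) = autsum (pushT h' T).
Proof. by have [ga <-] := aut_trans FI h h'; rewrite pushT_comp autsum_pushT. Qed.

Lemma in_coinv_pushT d e (h : Mor d e) (T : TAmb M N d) :
  in_coinv M N d T -> in_coinv M N e (pushT h T).
Proof.
move=> /[dup] HT /in_coinvE [tT _]; apply/in_coinvE; split; first exact: in_tens_push.
case: HT => s [_ ->]; rewrite !raddf_sum big1 // => p _.
by rewrite /= !raddfB /= -pushT_comp (autsum_pushT_indep (comp h p.1) h) subrr.
Qed.

Lemma in_coinv_pushT_indep d e (h h' : Mor d e) (T : TAmb M N d) :
  in_tens M N d T -> in_coinv M N e (pushT h T - pushT h' T).
Proof.
move=> HT; apply/in_coinvE; split; first by apply: in_tensB; apply: in_tens_push.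
by rewrite raddfB /= (autsum_pushT_indep h h') subrr.
Qed.

Lemma in_coinv_pushT_inj d e (h : Mor d e) (T : TAmb M N d) :
  in_tens M N d T -> in_coinv M N e (pushT h T) -> in_coinv M N d T.
Proof.
by move=> HT /in_coinvE [_ /autsum_pushT_eq0 T0]; apply/in_coinvE; split.
Qed.

Lemma pushT_tens_gen d e (u : Mor d e) (z : Idx M d) (y : Idx N d) :
  pushT u (tens_gen z y) = tens_gen (lift_idx u z) (lift_idx u y).
Proof.
rewrite /tens_gen pushT_outer (push_modproj FI (M := N)) (push_delta FI).
have -> : push (M := M) u (modproj (M := dual M) (deltaf K z)) =
          push (M := dual M) u (modproj (M := dual M) (deltaf K z)) by [].
by rewrite (push_modproj FI) (push_delta FI).
Qed.

Section Surjectivity.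
Variables (c1 c2 : Obj C).
Hypotheses (HM : is_rep M) (HN : is_rep N).
Hypotheses (degM : deg_le M c1) (degN : deg_le N c2).

(* By lift_orbit_surj every generator tens_gen over e is G_e-conjugate to the
   image of a generator over d, and tens_gen spans the tensors (tensproj_id). *)
Lemma autsum_pushT_surj d e (h : Mor d e) (S : TAmb M N e) :
  geq_sum c1 c2 d -> in_tens M N e S ->
  exists2 T, in_tens M N d T & autsum (pushT h T) = autsum S.
Proof.
move=> ge_d HS; rewrite -(tensproj_id HS) /tensproj.
have gen_lift (Y : Idx M e * Idx N e) : exists X : Idx M d * Idx N d,
    autsum (pushT h (tens_gen X.1 X.2)) = autsum (tens_gen Y.1 Y.2).
  move: Y => [[i [F1 a]] [j [F2 b]]].
  have L1 : leo (fc i) c1 by apply: degM; apply: leq_ltn_trans (ltn_ord a).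
  have L2 : leo (fc j) c2 by apply: degN; apply: leq_ltn_trans (ltn_ord b).
  have [ga [f1 [f2 [<- <-]]]] := lift_orbit_surj FI h ge_d L1 L2 F1 F2.
  exists (mkIdx f1 a, mkIdx f2 b).
  rewrite -(autsum_pushT ga) !pushT_tens_gen /=.
  by rewrite /lift_idx /= !compA.
elim: (index_enum _) => [|Y r [T HT autsumT]].
  by exists 0; [apply: in_tens0 | rewrite big_nil !raddf0].
have [X HX] := gen_lift Y.
exists (T + scalef (S Y) (tens_gen X.1 X.2)).
  by apply: in_tensD => //; apply/in_tensZ/in_tens_gen.
by rewrite big_cons !raddfD /= autsumT pushTZ !autsumZ HX addrC.
Qed.

Lemma in_coinv_pushT_surj d e (h : Mor d e) (S : TAmb M N e) :
  geq_sum c1 c2 d -> in_tens M N e S ->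
  exists2 T, in_tens M N d T & in_coinv M N e (S - pushT h T).
Proof.
move=> ge_d HS; have [T HT autsumT] := autsum_pushT_surj h ge_d HS.
exists T => //; apply/in_coinvE; split; first by apply: in_tensB => //; apply: in_tens_push.
by rewrite raddfB /= autsumT subrr.
Qed.

End Surjectivity.
End Tensors.

Theorem mainTheorem3 (C : category) (K : numClosedFieldType) (c1 c2 : Obj C)
    (M N : freeData C K) :
  FI_type C -> is_rep M -> is_rep N -> deg_le M c1 -> deg_le N c2 ->
  (forall d : Obj C,
     (* Theta is well defined on the coinvariants *)
     (forall T, in_coinv M N d T -> forall x, in_mod M d x -> Theta T x = 0) /\
     (* Theta takes values in Hom_{G_d}(M_d, N_d) *)
     (forall T, in_tens M N d T ->
        (forall x, in_mod M d x -> in_mod N d (Theta T x)) /\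
        (forall (g : Mor d d) x, is_iso g -> in_mod M d x ->
           Theta T (push g x) = push g (Theta T x))) /\
     (* injectivity of (M^* (x) N)_d / G_d -> Hom_{G_d}(M_d, N_d) *)
     (forall T, in_tens M N d T -> (forall x, in_mod M d x -> Theta T x = 0) ->
        in_coinv M N d T) /\
     (* surjectivity onto Hom_{G_d}(M_d, N_d) *)
     (forall P : TAmb M N d,
        (forall x, in_mod M d x -> in_mod N d (Phi P x)) ->
        (forall (g : Mor d d) x, is_iso g -> in_mod M d x ->
           Phi P (push g x) = push g (Phi P x)) ->
        exists2 T, in_tens M N d T & forall x, in_mod M d x -> Theta T x = Phi P x)) /\
  (forall (d e : Obj C) (h : Mor d e), geq_sum c1 c2 d ->
     (* h induces a map (M^* (x) N)_d / G_d -> (M^* (x) N)_e / G_e ... *)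
     (forall T, in_tens M N d T -> in_tens M N e (pushT h T)) /\
     (forall T, in_coinv M N d T -> in_coinv M N e (pushT h T)) /\
     (* ... independent of the choice of h ... *)
     (forall (h' : Mor d e) T, in_tens M N d T -> in_coinv M N e (pushT h T - pushT h' T)) /\
     (* ... which is injective ... *)
     (forall T, in_tens M N d T -> in_coinv M N e (pushT h T) -> in_coinv M N d T) /\
     (* ... and surjective *)
     (forall S, in_tens M N e S ->
        exists2 T, in_tens M N d T & in_coinv M N e (S - pushT h T))).
Proof.
move=> FI HM HN degM degN; split=> [d|d e h ge_d].
  split=> [T /(Theta_coinv FI) //|]; split=> [T HT|]; first split.
  - by move=> x _; apply: Theta_in_mod.
  - by move=> g x _ _; apply: Theta_push.
  split=> [T|P P_mod P_equiv]; first exact: Theta_eq0_coinv.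
  apply: Theta_surj => // g x; apply: P_equiv; exact: endo_iso.
split=> [T|]; first exact: in_tens_push.
split=> [T|]; first exact: in_coinv_pushT.
split=> [h' T|]; first exact: in_coinv_pushT_indep.
split=> [T|S]; first exact: in_coinv_pushT_inj.
exact: (in_coinv_pushT_surj FI HM HN degM degN h ge_d).
Qed.
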